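(* Let $d_1,\dots,d_n$ be positive integers and let $b,a_1,\dots,a_n\in\mathbb{F}_q^*$. Let $$N^*=\#\{(x_1,\dots,x_n)\in(\mathbb{F}_q^* )^n : a_1x_1^{d_1}+\cdots+a_nx_n^{d_n}=b\}.$$ Then $$\left|N^*-\frac1q\big[(q-1)^n-(-1)^n\big]\right|\le\sum_{e=0}^{n-1}\ \sum_{1\le i_{e+1}<i_{e+2}<\cdots<i_n\le n}\ \prod_{j=e+1}^n(d_{i_j}-1)\,\sqrt q^{\,n-e-1}.$$ *)

From mathcomp Require Import all_boot all_order all_algebra all_field.
Set Implicit Arguments. Unset Strict Implicit. Unset Printing Implicit Defensive.
Import Order.TTheory GRing.Theory Num.Theory.
Local Open Scope ring_scope.

Definition Nstar (F : finFieldType) (n : nat) (d : 'I_n -> nat) (a : 'I_n -> F) (b : F) : nat :=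
  #|[set x : {ffun 'I_n -> F} | [forall i, x i != 0] &&
       (\sum_(i < n) a i * x i ^+ d i == b)]|.

(* Writing the indicator of [a_1 x_1^d_1 + ... + a_n x_n^d_n = b] with a nontrivial
   additive character [psi] gives
     q N* = (q - 1)^n + sum_(c != 0) psi(-c b) prod_i sum_(t != 0) psi(c a_i t^d_i).
   Counting [d]-th roots with multiplicative characters, each inner sum becomes
   [sum_lambda lambda(c) G(lambda^-1, a_i)] over the characters with [lambda^d_i = 1],
   so every term is a product of Gauss sums.  The term where all characters are
   trivial equals [-(-1)^n]; all others are bounded with [|G(lambda)| = sqrt q] for
   nontrivial [lambda] and [G(1) = -1].  As at most [d_i - 1] nontrivial characters
   occur for each [i], the error is at most [sqrt q (prod_i (1 + (d_i - 1) sqrt q) - 1)],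
   which is [q] times the stated bound. *)

From mathcomp Require Import all_boot all_order all_algebra all_field cyclic.
From mathcomp Require Import complex ring zify.
Set Implicit Arguments. Unset Strict Implicit. Unset Printing Implicit Defensive.
Import Order.TTheory GRing.Theory Num.Theory.
Local Open Scope ring_scope.

Lemma mulr_fixed_eq0 (K : idomainType) (c x : K) : c != 1 -> c * x = x -> x = 0.
Proof.
move=> c1 /eqP; rewrite -subr_eq0 -{2}[x]mul1r -mulrBl mulf_eq0 subr_eq0.
by rewrite (negbTE c1) => /eqP.
Qed.

Lemma sum_unity_root_expr (K : idomainType) (m : nat) (z : K) : z ^+ m = 1 ->
  \sum_(k < m) z ^+ k = if z == 1 then m%:R else 0.
Proof.
move=> zm; have [->|z1] := eqVneq z 1.
  by under eq_bigr do rewrite expr1n; rewrite sumr_const card_ord.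
have : (z - 1) * \sum_(k < m) z ^+ k = 0 by rewrite -subrX1 zm subrr.
by move/eqP; rewrite mulf_eq0 subr_eq0 (negbTE z1) => /eqP.
Qed.

Lemma norm1_neq0 (C : numDomainType) (z : C) : `|z| = 1 -> z != 0.
Proof. by move=> z1; rewrite -normr_eq0 z1 oner_neq0. Qed.

Lemma conjC_norm1 (C : numClosedFieldType) (z : C) : `|z| = 1 -> z^* = z^-1.
Proof. by move=> z1; rewrite invC_norm z1 expr1n invr1 mul1r. Qed.

Lemma norm_prim_root (C : numDomainType) n (z : C) : n.-primitive_root z -> `|z| = 1.
Proof.
move=> z_prim; apply/eqP; rewrite -(pexpr_eq1 (prim_order_gt0 z_prim)) //.
by rewrite -normrX (prim_expr_order z_prim) normr1.
Qed.

(* The roots of ['X^n - 1] in [C] are simple, so there are [n] of them. *)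
Lemma closed_field_prim_root (C : numClosedFieldType) n :
  (0 < n)%N -> {z : C | n.-primitive_root z}.
Proof.
move=> n_gt0; apply/sigW.
have [r Dp] := closed_field_poly_normal ('X^n - 1 : {poly C}).
rewrite (monicP (monicXnsubC _ n_gt0)) scale1r in Dp.
have r_unity : all n.-unity_root r by apply/allP=> z; rewrite -root_prod_XsubC -Dp.
have r_uniq : uniq r.
  by rewrite -separable_prod_XsubC -Dp separable_Xn_sub_1 // pnatr_eq0 -lt0n.
have size_r : (n < (size r).+1)%N by rewrite -(size_prod_XsubC r id) -Dp size_XnsubC.
by have [z _] := hasP (has_prim_root n_gt0 r_unity r_uniq size_r); exists z.
Qed.

Lemma finField_card_predK (F : finFieldType) : #|F|.-1.+1 = #|F|.
Proof. by rewrite prednK // ltnW // finNzRing_gt1. Qed.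

Lemma finField_card_pred_gt0 (F : finFieldType) : (0 < #|F|.-1)%N.
Proof. by rewrite -ltnS finField_card_predK finNzRing_gt1. Qed.

Lemma finField_unity_root (F : finFieldType) (x : F) : x != 0 -> x ^+ #|F|.-1 = 1.
Proof.
by move=> x0; apply: (mulIf x0); rewrite mul1r -exprSr finField_card_predK expf_card.
Qed.

Lemma finField_prim_root (F : finFieldType) : {g : F | (#|F|.-1).-primitive_root g}.
Proof.
have m_gt0 := finField_card_pred_gt0 F; apply/sigW; set r := enum (predC1 (0 : F)).
have r_unity : all (#|F|.-1).-unity_root r.
  by apply/allP => x; rewrite mem_enum unity_rootE => /finField_unity_root ->.
have size_r : (#|F|.-1 <= size r)%N by rewrite -cardE cardC1.
by have [g _] := hasP (has_prim_root m_gt0 r_unity (enum_uniq _) size_r); exists g.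
Qed.

(* [x |-> z ^+ c(x)], with [c] a coordinate of [F] over its prime field ['F_p]
   and [z] a primitive root of unity of order [#|'F_p|]. *)
Lemma additive_char_exists (C : numClosedFieldType) (F : finFieldType) :
  exists psi : F -> C, [/\ {morph psi : x y / x + y >-> x * y},
    forall x, `|psi x| = 1 & exists x0, psi x0 != 1].
Proof.
have [p _ pcharFp] := finPcharP F; pose V := pPrimeCharType pcharFp.
have dim_gt0 : (0 < \dim {: V : vectType 'F_p})%N.
  rewrite lt0n dimv_eq0; apply: contraNneq (oner_neq0 V) => fullv0.
  by rewrite -memv0 -fullv0 memvf.
pose e := vbasis {: V : vectType 'F_p}; pose i0 := Ordinal dim_gt0.
pose N := (Zp_trunc (pdiv p)).+2.
have [z z_prim] := closed_field_prim_root C (ltn0Sn N.-1).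
exists (fun x => z ^+ (coord e i0 (x : V) : 'F_p)); split.
- move=> x y /=; rewrite -exprD -[RHS](prim_expr_mod z_prim).
  by rewrite (linearD (coord e i0)).
- by move=> x; rewrite normrX (norm_prim_root z_prim) expr1n.
exists (e`_i0 : V); rewrite coord_free ?eqxx; last exact: basis_free (vbasisP _).
by rewrite -(prim_order_dvd z_prim).
Qed.

Definition gauss_sum (F : finFieldType) (C : nzRingType) (u psi : F -> C) (z : F) : C :=
  \sum_(x | x != 0) u x * psi (z * x).

(* The [k] for which the character [chi ^+ k] of a cyclic group of order [m] has
   order dividing [d]. *)
Definition ord_torsion (m d : nat) : pred 'I_m := [pred k : 'I_m | (m %| d * k)%N].
Arguments ord_torsion : clear implicits.

Section CharacterSums.

Variables (C : numClosedFieldType) (F : finFieldType).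
Local Notation q := #|F|.
Local Notation m := #|F|.-1.

Let m_gt0 := finField_card_pred_gt0 F.

Lemma sum_nonzero_const (c : C) : \sum_(x : F | x != 0) c = m%:R * c.
Proof. by rewrite (eq_bigl (mem (predC1 0))) // sumr_const cardC1 mulr_natl. Qed.

Variable psi : F -> C.
Hypothesis psiD : {morph psi : x y / x + y >-> x * y}.
Hypothesis psi_norm : forall x, `|psi x| = 1.
Variable x1 : F.
Hypothesis psi_x1 : psi x1 != 1.

Lemma add_char0 : psi 0 = 1.
Proof.
apply: (mulfI (norm1_neq0 (psi_norm 0))).
by rewrite -psiD addr0 mulr1.
Qed.

Lemma add_char_sum (I : finType) (f : I -> F) : psi (\sum_i f i) = \prod_i psi (f i).
Proof. exact: (big_morph psi psiD add_char0). Qed.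

Lemma conj_add_char x : (psi x)^* = psi (- x).
Proof.
rewrite conjC_norm1 //; apply: (mulfI (norm1_neq0 (psi_norm x))).
by rewrite -psiD subrr add_char0 divff ?norm1_neq0.
Qed.

Lemma sum_add_char_mul w : \sum_y psi (w * y) = if w == 0 then q%:R else 0.
Proof.
have [->|w0] := eqVneq w 0.
  by under eq_bigr do rewrite mul0r add_char0; rewrite sumr_const.
rewrite (reindex_inj (mulfI (invr_neq0 w0))) /=.
under eq_bigr do rewrite mulrA divff // mul1r.
apply: (mulr_fixed_eq0 psi_x1); rewrite mulr_sumr [RHS](reindex_inj (addrI x1)) /=.
by apply: eq_bigr => y _; rewrite psiD.
Qed.

Lemma sum_add_char_mul_nz w : w != 0 -> \sum_(y | y != 0) psi (w * y) = -1.
Proof.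
move=> w0; have := sum_add_char_mul w; rewrite (negbTE w0) (bigD1 0) //= mulr0.
by rewrite add_char0 => /eqP; rewrite addrC addr_eq0 => /eqP.
Qed.

Lemma gauss_sum1 z : z != 0 -> gauss_sum (fun _ => 1) psi z = -1.
Proof.
move=> z0; rewrite /gauss_sum.
by under eq_bigr do rewrite mul1r; apply: sum_add_char_mul_nz.
Qed.

Section MultiplicativeCharacter.

Variable u : F -> C.
Hypothesis uM : forall x y, x != 0 -> y != 0 -> u (x * y) = u x * u y.
Hypothesis u_norm : forall x, x != 0 -> `|u x| = 1.

Lemma mult_char1 : u 1 = 1.
Proof.
apply: (mulfI (norm1_neq0 (u_norm (oner_neq0 F)))).
by rewrite -uM ?oner_neq0 // !mulr1.
Qed.

Lemma sum_mult_char_eq0 t : t != 0 -> u t != 1 -> \sum_(x | x != 0) u x = 0.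
Proof.
move=> t0 ut; apply: (mulr_fixed_eq0 ut).
rewrite mulr_sumr [RHS](reindex_inj (mulfI t0)) /=.
apply: eq_big => [x|x x0]; first by rewrite mulf_eq0 (negbTE t0).
by rewrite uM.
Qed.

Lemma gauss_sumZ c z : c != 0 -> u c * gauss_sum u psi (c * z) = gauss_sum u psi z.
Proof.
move=> c0; rewrite /gauss_sum mulr_sumr [RHS](reindex_inj (mulfI c0)) /=.
apply: eq_big => [x|x x0]; first by rewrite mulf_eq0 (negbTE c0).
by rewrite uM // mulrA; congr (_ * psi _); ring.
Qed.

(* Substitute [x = t y] in the double sum over [(x, y)]. *)
Lemma gauss_sum_mul_conj z : gauss_sum u psi z * (gauss_sum u psi z)^* =
  \sum_(t | t != 0) u t * \sum_(y | y != 0) psi (z * (t - 1) * y).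
Proof.
rewrite /gauss_sum rmorph_sum /= big_distrlr exchange_big /=.
under [RHS]eq_bigr do rewrite mulr_sumr; rewrite [RHS]exchange_big /=.
apply: eq_bigr => y y0; rewrite (reindex_inj (mulIf y0)) /=.
apply: eq_big => [t|t]; first by rewrite mulf_eq0 (negbTE y0) orbF.
rewrite mulf_eq0 (negbTE y0) orbF => t0.
rewrite rmorphM /= conjC_norm1 ?u_norm // conj_add_char uM //.
have -> : z * (t - 1) * y = z * (t * y) + - (z * y) by ring.
by rewrite psiD; field; apply: norm1_neq0 (u_norm y0).
Qed.

Lemma gauss_sum_normCK z t : z != 0 -> t != 0 -> u t != 1 ->
  `|gauss_sum u psi z| ^+ 2 = q%:R.
Proof.
move=> z0 t0 ut; rewrite normCK gauss_sum_mul_conj.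
transitivity (\sum_(s | s != 0) u s * (if s == 1 then m%:R else -1)).
  apply: eq_bigr => s s0; congr (_ * _); have [->|s1] := eqVneq s 1.
    under eq_bigr do rewrite subrr mulr0 mul0r add_char0.
    by rewrite sum_nonzero_const mulr1.
  by apply: sum_add_char_mul_nz; rewrite mulf_neq0 // subr_eq0.
rewrite (bigD1 1) ?oner_neq0 //= eqxx mult_char1 mul1r.
under eq_bigr => s /andP[_ /negbTE ->] do rewrite mulrN1.
have := sum_mult_char_eq0 t0 ut; rewrite (bigD1 1) ?oner_neq0 //= mult_char1.
move/eqP; rewrite addrC addr_eq0 sumrN => /eqP ->.
by rewrite opprK natr1 finField_card_predK.
Qed.

Lemma norm_gauss_sum_le z : z != 0 -> `|gauss_sum u psi z| <= sqrtC q%:R.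
Proof.
move=> z0; have [|u_triv] := boolP [exists t, (t != 0) && (u t != 1)].
  move=> /existsP[t /andP[t0 ut]].
  by rewrite -(sqrCK (normr_ge0 _)) (gauss_sum_normCK z0 t0 ut).
have -> : gauss_sum u psi z = -1.
  rewrite -(gauss_sum1 z0); apply: eq_bigr => x x0.
  by move: u_triv; rewrite negb_exists => /forallP/(_ x); rewrite x0 negbK => /eqP ->.
rewrite normrN normr1 -{1}sqrtC1 ler_sqrtC ?nnegrE ?ler01 ?ler0n // ler1n.
exact: ltnW (finNzRing_gt1 F).
Qed.

End MultiplicativeCharacter.

Variables (g : F) (w : C).
Hypotheses (g_prim : m.-primitive_root g) (w_prim : m.-primitive_root w).

Lemma prim_gen_neq0 : g != 0.
Proof. by rewrite (prim_root_eq0 g_prim) -lt0n m_gt0. Qed.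

Definition dlog (x : F) : nat :=
  if [pick i : 'I_m | g ^+ i == x] is Some i then i else 0.

Lemma dlogK x : x != 0 -> g ^+ dlog x = x.
Proof.
move=> x0; have [i xi] := prim_rootP g_prim (finField_unity_root x0).
rewrite /dlog; case: pickP => [j /eqP //| no_j].
by have := no_j i; rewrite xi eqxx.
Qed.

Definition chi (x : F) : C := w ^+ dlog x.

Lemma chi_eq x y : x != 0 -> y != 0 -> (chi x == chi y) = (x == y).
Proof.
move=> x0 y0; rewrite /chi (eq_prim_root_expr w_prim) -(eq_prim_root_expr g_prim).
by rewrite !dlogK.
Qed.

Lemma chiM x y : x != 0 -> y != 0 -> chi (x * y) = chi x * chi y.
Proof.
move=> x0 y0; rewrite /chi -exprD; apply/eqP.
rewrite (eq_prim_root_expr w_prim) -(eq_prim_root_expr g_prim) exprD !dlogK //.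
by rewrite mulf_neq0.
Qed.

Lemma norm_chi x : `|chi x| = 1.
Proof. by rewrite normrX (norm_prim_root w_prim) expr1n. Qed.

Lemma chi_order x : chi x ^+ m = 1.
Proof. by rewrite -exprM mulnC exprM (prim_expr_order w_prim) expr1n. Qed.

Lemma chi_gen : chi g = w.
Proof.
apply/eqP; rewrite /chi -{2}(expr1 w) (eq_prim_root_expr w_prim).
by rewrite -(eq_prim_root_expr g_prim) dlogK ?expr1 ?prim_gen_neq0.
Qed.

Lemma chiXM k x y : x != 0 -> y != 0 -> chi (x * y) ^+ k = chi x ^+ k * chi y ^+ k.
Proof. by move=> x0 y0; rewrite chiM // exprMn. Qed.

Lemma norm_chiX k x : x != 0 -> `|chi x ^+ k| = 1.
Proof. by move=> _; rewrite normrX norm_chi expr1n. Qed.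

Lemma chiX x k : x != 0 -> chi (x ^+ k) = chi x ^+ k.
Proof.
move=> x0; elim: k => [|k IHk].
  by rewrite !expr0 (mult_char1 chiM (fun x _ => norm_chi x)).
by rewrite !exprS chiM ?expf_neq0 // IHk.
Qed.

Lemma chiV x : chi x ^+ m.-1 = (chi x)^-1.
Proof.
apply: (mulfI (norm1_neq0 (norm_chi x))).
by rewrite divff ?norm1_neq0 ?norm_chi // -exprS prednK ?m_gt0 // chi_order.
Qed.

Lemma sum_chiX j : \sum_(x | x != 0) chi x ^+ j = if (m %| j)%N then m%:R else 0.
Proof.
case: ifPn => [/dvdnP[l ->] | m_j].
  under eq_bigr do rewrite mulnC exprM chi_order expr1n.
  by rewrite sum_nonzero_const mulr1.
apply: (sum_mult_char_eq0 (u := fun x => chi x ^+ j) (chiXM j) prim_gen_neq0).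
by rewrite chi_gen -(prim_order_dvd w_prim).
Qed.

(* Detecting [t ^+ d = y] by the orthogonality of the powers of [chi]. *)
Lemma eq_expr_indicator d t y : t != 0 -> y != 0 ->
  (if t ^+ d == y then 1 else 0 : C) =
    m%:R^-1 * \sum_(k < m) (chi t ^+ d * chi y ^+ m.-1) ^+ k.
Proof.
move=> t0 y0; rewrite sum_unity_root_expr; last first.
  by rewrite exprMn -!exprM !(mulnC _ m) !exprM !chi_order !expr1n mulr1.
rewrite chiV -(chiX _ t0) -(chi_eq (expf_neq0 _ t0) y0).
have chi_y0 := norm1_neq0 (norm_chi y).
rewrite -[_ / _ == 1](inj_eq (mulIf chi_y0)) divfK // mul1r.
by case: eqP; rewrite ?mulr0 // mulVf // pnatr_eq0 -lt0n m_gt0.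
Qed.

Local Notation G k := (gauss_sum (fun x => chi x ^+ k) psi).

(* The number of [d]-th roots of [y] is the sum of [lambda y] over the characters
   [lambda = chi ^+ (m.-1 * k)] with [lambda ^+ d = 1]. *)
Lemma sum_nonzero_expr (f : F -> C) d :
  \sum_(t | t != 0) f (t ^+ d) =
    \sum_(k < m | (m %| d * k)%N) \sum_(y | y != 0) chi y ^+ (m.-1 * k) * f y.
Proof.
transitivity (\sum_(t | t != 0) \sum_(y | y != 0) (if t ^+ d == y then 1 else 0) * f y).
  apply: eq_bigr => t t0; rewrite (bigD1 (t ^+ d)) ?expf_neq0 //= eqxx mul1r.
  by rewrite big1 ?addr0 // => y /andP[_ /negbTE]; rewrite eq_sym => ->; rewrite mul0r.
transitivity (\sum_(t | t != 0) \sum_(y | y != 0) \sum_(k < m)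
    m%:R^-1 * chi t ^+ (d * k) * (chi y ^+ (m.-1 * k) * f y)).
  apply: eq_bigr => t t0; apply: eq_bigr => y y0.
  rewrite eq_expr_indicator // mulr_sumr mulr_suml; apply: eq_bigr => k _.
  by rewrite exprMn -!exprM !mulrA.
under eq_bigr do rewrite exchange_big /=.
rewrite exchange_big [RHS]big_mkcond /=; apply: eq_bigr => k _.
under eq_bigr do rewrite -mulr_sumr.
rewrite -big_distrl /= -mulr_sumr sum_chiX; case: ifP => _; last by rewrite mulr0 mul0r.
by rewrite mulVf ?mul1r // pnatr_eq0 -lt0n m_gt0.
Qed.

Lemma sum_add_char_monomial d a c : c != 0 ->
  \sum_(t | t != 0) psi (c * (a * t ^+ d)) =
    \sum_(k < m | (m %| d * k)%N) chi c ^+ k * G (m.-1 * k) a.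
Proof.
move=> c0; rewrite (sum_nonzero_expr (fun y => psi (c * (a * y)))).
apply: eq_bigr => k _.
rewrite -(gauss_sumZ (u := fun x => chi x ^+ (m.-1 * k)) (chiXM _) _ c0) mulrA -exprD.
rewrite -mulSn prednK ?m_gt0 // mulnC exprM chi_order expr1n mul1r.
by apply: eq_bigr => y _; rewrite mulrA.
Qed.

Lemma Nstar_add_char n (d : 'I_n -> nat) (a : 'I_n -> F) b :
  q%:R * (Nstar d a b)%:R = m%:R ^+ n +
    \sum_(c | c != 0) psi (- (c * b)) *
      \prod_i \sum_(t | t != 0) psi (c * (a i * t ^+ d i)).
Proof.
rewrite /Nstar -sum1_card natr_sum.
transitivity (\sum_(x : {ffun 'I_n -> F} | [forall i, x i != 0])
    \sum_c psi (- (c * b)) * \prod_i psi (c * (a i * x i ^+ d i))).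
  rewrite big_mkcond mulr_sumr [RHS]big_mkcond /=; apply: eq_bigr => x _.
  rewrite inE; case: [forall i, x i != 0]; rewrite ?mulr0 //=.
  transitivity (if \sum_i a i * x i ^+ d i - b == 0 then q%:R else 0 : C).
    by rewrite subr_eq0; case: ifP; rewrite ?mulr1 ?mulr0.
  rewrite -sum_add_char_mul; apply: eq_bigr => c _.
  rewrite mulrC mulrBr psiD mulrC -add_char_sum mulr_sumr.
  by congr (psi _ * psi _); rewrite mulrN.
rewrite exchange_big /=.
transitivity (\sum_c psi (- (c * b)) *
    \prod_i \sum_(t | t != 0) psi (c * (a i * t ^+ d i))).
  apply: eq_bigr => c _; rewrite -mulr_sumr (bigA_distr_big (fun t : F => t != 0)).
  by congr (_ * _); apply: eq_bigl => x; apply/forallP/familyP => x_nz i; have := x_nz i.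
rewrite (bigD1 0) //= mul0r oppr0 add_char0 mul1r; congr (_ + _).
under eq_bigr do under eq_bigr do rewrite mul0r add_char0.
by rewrite (eq_bigr _ (fun i _ => sum_nonzero_const 1)) mulr1 prodr_const card_ord.
Qed.

Lemma Nstar_gauss_sums n (d : 'I_n -> nat) (a : 'I_n -> F) b :
  q%:R * (Nstar d a b)%:R = m%:R ^+ n +
    \sum_(kk in family (fun i => ord_torsion m (d i)))
      (\prod_i G (m.-1 * kk i) (a i)) * G (\sum_i kk i) (- b).
Proof.
rewrite Nstar_add_char; congr (_ + _).
under eq_bigr => c c0.
  rewrite (eq_bigr _ (fun i _ => sum_add_char_monomial (d i) (a i) c0)).
  rewrite (bigA_distr_big_dep (fun i => ord_torsion m (d i))) mulr_sumr.
over.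
rewrite exchange_big /=; apply: eq_bigr => kk _.
rewrite /gauss_sum mulr_sumr; apply: eq_bigr => c _.
by rewrite big_split /= prodrXr mulNr [b * c]mulrC; ring.
Qed.

Local Notation sqrtq := (sqrtC (q%:R : C)).
Local Notation weight k := (if (k : nat) == 0%N then 1 else sqrtq).

Lemma gauss_chiX0 z : z != 0 -> G 0 z = -1.
Proof. exact: gauss_sum1. Qed.

Lemma norm_gauss_chiX_le k z : z != 0 -> `|G k z| <= sqrtq.
Proof. exact: norm_gauss_sum_le (chiXM k) (norm_chiX k) z. Qed.

Lemma norm_gauss_chiX_weight (k : 'I_m) z : z != 0 -> `|G (m.-1 * k) z| <= weight k.
Proof.
move=> z0; case: eqP => [-> | _]; last exact: norm_gauss_chiX_le.
by rewrite muln0 gauss_chiX0 // normrN normr1.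
Qed.

Lemma sum_prod_weight n (d : 'I_n -> nat) :
  \sum_(kk in family (fun i => ord_torsion m (d i))) \prod_i weight (kk i) =
    \prod_i (1 + #|[pred k in ord_torsion m (d i) | (0 < k)%N]|%:R * sqrtq).
Proof.
rewrite -(bigA_distr_big_dep _ (fun i (k : 'I_m) => weight k)); apply: eq_bigr => i _.
rewrite (bigD1 (Ordinal m_gt0)) /=; last by rewrite /ord_torsion /= muln0 dvdn0.
congr (1 + _).
rewrite [RHS](_ : _ = \sum_(k in [pred k in ord_torsion m (d i) | (0 < k)%N]) sqrtq).
  2: by rewrite sumr_const mulr_natl.
apply: eq_big => [k | k /andP[_ k_nz]]; first by rewrite inE -val_eqE lt0n.
by rewrite ifF //; apply: contraNF k_nz => /eqP k0; apply/eqP/val_inj.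
Qed.

Lemma Nstar_bound n (d : 'I_n -> nat) (a : 'I_n -> F) b :
    (forall i, a i != 0) -> b != 0 ->
  `|q%:R * (Nstar d a b)%:R - (m%:R ^+ n - (-1) ^+ n)| <=
    sqrtq * (\prod_i (1 + #|[pred k in ord_torsion m (d i) | (0 < k)%N]|%:R * sqrtq) - 1).
Proof.
move=> a_nz b_nz; pose kk0 : {ffun 'I_n -> 'I_m} := [ffun _ => Ordinal m_gt0].
have kk0_fam : kk0 \in family (fun i => ord_torsion m (d i)).
  by apply/familyP => i; rewrite ffunE /ord_torsion inE /= muln0 dvdn0.
rewrite -sum_prod_weight (bigD1 kk0) //= big1 => [|i _]; last by rewrite ffunE.
rewrite addrC addrK Nstar_gauss_sums (bigD1 kk0) //=.
have -> : \prod_i G (m.-1 * kk0 i) (a i) * G (\sum_i kk0 i) (- b) = - (-1) ^+ n.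
  rewrite (eq_bigr (fun _ => -1)) => [|i _]; last by rewrite ffunE /= muln0 gauss_chiX0.
  have -> : (\sum_i (kk0 i : nat) = 0)%N by rewrite big1 // => i _; rewrite ffunE.
  by rewrite gauss_chiX0 ?oppr_eq0 // prodr_const card_ord mulrN1.
set rest := \sum_(kk | _) _.
have -> : m%:R ^+ n + (- (-1) ^+ n + rest) - (m%:R ^+ n - (-1) ^+ n) = rest by ring.
rewrite mulr_sumr; apply: le_trans (ler_norm_sum _ _ _) (ler_sum _ _).
move=> kk _; rewrite normrM normr_prod mulrC.
rewrite ler_pM ?normr_ge0 ?prodr_ge0 ?norm_gauss_chiX_le ?oppr_eq0 //.
by apply: ler_prod => i _; rewrite normr_ge0 norm_gauss_chiX_weight.
Qed.

End CharacterSums.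

(* [k |-> d k / m] is injective on the [d]-torsion and misses [0] there. *)
Lemma card_ord_torsion_pos m d : (0 < d)%N ->
  (#|[pred k in ord_torsion m d | (0 < k)%N]| <= d.-1)%N.
Proof.
case: d => // d _ /=; set T := [pred k in _ | _].
have m_gt0 (k : 'I_m) : (0 < m)%N by apply: leq_ltn_trans (ltn_ord k).
have f_lt (k : 'I_m) : (d.+1 * k %/ m < d.+1)%N.
  by rewrite ltn_divLR ?m_gt0 // ltn_pmul2l.
pose f (k : 'I_m) : 'I_d.+1 := inord (d.+1 * k %/ m).
have f_inj : {in T &, injective f}.
  move=> k1 k2 /andP[/= /divnK h1 _] /andP[/= /divnK h2 _] /(congr1 val).
  rewrite /= !inordK // => f12; apply/val_inj/eqP.
  by rewrite -(eqn_pmul2l (ltn0Sn d)) -h1 -h2 f12.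
rewrite -(card_in_imset f_inj).
suff /subset_leq_card : [set f k | k in T] \subset predC1 (ord0 : 'I_d.+1).
  by rewrite cardC1 card_ord.
apply/subsetP => _ /imsetP[k /andP[/= dvd_dk k_gt0] ->].
rewrite !inE; apply/eqP => /(congr1 val); rewrite /= inordK //.
by move/eqP; rewrite -leqn0 leqNgt divn_gt0 ?m_gt0 // dvdn_leq ?muln_gt0.
Qed.

Lemma prod_1D (R : comPzRingType) n (y : 'I_n -> R) :
  \prod_i (1 + y i) = \sum_(S : {set 'I_n}) \prod_(i in S) y i.
Proof.
rewrite (eq_bigr _ (fun i _ => addrC 1 (y i))) bigA_distr.
by apply: eq_bigr => S _; rewrite [RHS]big_mkcond.
Qed.

Lemma sum_nonempty_by_card (V : nmodType) n (f : {set 'I_n} -> V) :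
  \sum_(S : {set 'I_n} | S != set0) f S =
    \sum_(e < n) \sum_(S : {set 'I_n} | #|S| == (n - e)%N) f S.
Proof.
under [RHS]eq_bigr do rewrite big_mkcond.
rewrite [RHS]exchange_big big_mkcond; apply: eq_bigr => S _ /=; rewrite -big_mkcondr.
have [-> | S_nz] := eqVneq S set0.
  by rewrite big_pred0 // => e; rewrite cards0; have := ltn_ord e; lia.
have : (0 < #|S| <= n)%N by rewrite card_gt0 S_nz -[n in (_ <= n)%N]card_ord max_card.
move=> /andP[S_gt0 S_le]; have e_lt : (n - #|S| < n)%N by lia.
rewrite (big_pred1 (Ordinal e_lt)) // => e.
apply/eqP/eqP => [S_e | -> /=]; last by rewrite subKn.
by apply/val_inj => /=; have := ltn_ord e; lia.
Qed.

Lemma prod_1DM_sub1 (R : comPzRingType) n (x : 'I_n -> R) s :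
  \prod_i (1 + x i * s) - 1 =
    s * \sum_(e < n) \sum_(S : {set 'I_n} | #|S| == (n - e)%N)
      (\prod_(i in S) x i) * s ^+ (n - e - 1).
Proof.
rewrite prod_1D (bigD1 set0) //= big_set0 [1 + _]addrC addrK.
rewrite sum_nonempty_by_card mulr_sumr; apply: eq_bigr => e _.
rewrite mulr_sumr; apply: eq_big => // S /eqP S_e.
rewrite big_split /= prodr_const mulrCA -exprS S_e; congr (_ * _ ^+ _).
by have := ltn_ord e; lia.
Qed.

Lemma normC_real_complex (R : rcfType) (x : R) : `|x%:C%C| = `|x|%:C%C.
Proof. by rewrite normc_def /= expr0n addr0 sqrtr_sqr. Qed.

Lemma sqrtC_real_complex (R : rcfType) (x : R) :
  0 <= x -> sqrtC x%:C%C = (Num.sqrt x)%:C%C.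
Proof.
move=> x_ge0; rewrite -{1}(sqr_sqrtr x_ge0) rmorphXn /=.
by rewrite sqrCK // lecR sqrtr_ge0.
Qed.

Lemma Nstar_bound_real (R : rcfType) (F : finFieldType) n
    (d : 'I_n -> nat) (a : 'I_n -> F) b :
    (forall i, a i != 0) -> b != 0 ->
  `|#|F|%:R * (Nstar d a b)%:R - (#|F|.-1%:R ^+ n - (-1) ^+ n) : R| <=
    Num.sqrt #|F|%:R * (\prod_i (1 +
      #|[pred k in ord_torsion #|F|.-1 (d i) | (0 < k)%N]|%:R * Num.sqrt #|F|%:R) - 1).
Proof.
move=> a_nz b_nz; have [g g_prim] := finField_prim_root F.
have [w w_prim] := closed_field_prim_root R[i] (finField_card_pred_gt0 F).
have [psi [psiD psi_norm [x1 psi_x1]]] := additive_char_exists R[i] F.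
rewrite -lecR -normC_real_complex.
rewrite !(rmorphB, rmorphM, rmorphXn, rmorphN, rmorph1, rmorph_prod) /=.
rewrite -sqrtC_real_complex ?ler0n // !rmorph_nat.
under eq_bigr do
  rewrite rmorphD rmorph1 rmorphM /= -sqrtC_real_complex ?ler0n // !rmorph_nat.
exact: (Nstar_bound psiD psi_norm psi_x1 g_prim w_prim d a_nz b_nz).
Qed.

Theorem mainTheorem7 (R : rcfType) (F : finFieldType) (n : nat)
    (d : 'I_n -> nat) (a : 'I_n -> F) (b : F)
    (hd : forall i, (0 < d i)%N) (ha : forall i, a i != 0) (hb : b != 0) :
  let q := #|F| in
  `| (Nstar d a b)%:R - (((q%:R - 1) ^+ n - (-1) ^+ n) / q%:R : R) |
  <= \sum_(e < n) \sum_(S : {set 'I_n} | #|S| == (n - e)%N)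
        (\prod_(i in S) ((d i)%:R - 1)) * Num.sqrt (q%:R) ^+ (n - e - 1).
Proof.
cbv zeta; set q := #|F|; set s := Num.sqrt (q%:R : R).
have q_gt0 : (0 : R) < q%:R by rewrite ltr0n ltnW // finNzRing_gt1.
have natr_pred k : (0 < k)%N -> k.-1%:R = k%:R - 1 :> R.
  by case: k => // k _; rewrite mulrSr addrK.
rewrite -natr_pred ?(ltnW (finNzRing_gt1 F)) //.
rewrite -[X in `|X|](mulKf (lt0r_neq0 q_gt0)) mulrBr mulrCA divff ?lt0r_neq0 // mulr1.
rewrite normrM normfV (gtr0_norm q_gt0) ler_pdivrMl //.
apply: le_trans (Nstar_bound_real R d ha hb) _.
rewrite -[q%:R in X in _ <= X](sqr_sqrtr (ler0n _ _)) -/s expr2 -mulrA -prod_1DM_sub1.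
rewrite ler_wpM2l ?sqrtr_ge0 // lerD2r; apply: ler_prod => i _.
rewrite addr_ge0 ?mulr_ge0 ?ler0n ?sqrtr_ge0 //= lerD2l ler_wpM2r ?sqrtr_ge0 //.
by rewrite -natr_pred // ler_nat card_ord_torsion_pos.
Qed.
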